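(* Let $c$ be a positive measurable function on $(T,+\infty)$ such that $c(t)e^{-t}$ is decreasing on $(T,+\infty)$ and $\int_{T_1}^{+\infty}c(t)e^{-t}dt<+\infty$ for some $T_1>T$. Then there is a positive measurable function $\tilde c$ on $(T,+\infty)$ such that (1) $\tilde c\ge c$ on $(T,+\infty)$; (2) $\tilde c(t)e^{-t}$ is strictly decreasing on $(T,+\infty)$ and $\tilde c$ is increasing on $(a,+\infty)$ for some real number $a>T$; (3) $\int_{T_1}^{+\infty}\tilde c(t)e^{-t}dt<+\infty$. Moreover, if $\int_T^{+\infty}c(t)e^{-t}dt<+\infty$ and $c\in\mathcal{P}_T$, then $\tilde c$ can be chosen to satisfy (1)–(3) and in addition $\int_T^{+\infty}\tilde c(t)e^{-t}dt<+\infty$ and $\tilde c\in\mathcal{P}_T$.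
   Context: For the ''moreover'' part: $M$ is a complex manifold, $\psi$ is plurisubharmonic on $M$ with $T=-\sup_M\psi$, and $\varphi$ is Lebesgue measurable with $\varphi+\psi$ plurisubharmonic. $\mathcal{P}_T$ is the class of positive measurable functions $c$ on $(T,+\infty)$ such that $c(t)e^{-t}$ is decreasing and there is a closed subset $E\subset M$ with $E\subset\{z\in Z:\psi(z)=-\infty\}$ for some analytic subset $Z$ of $M$, such that $e^{-\varphi}c(-\psi)$ has a positive lower bound on every compact subset of $M\setminus E$. *)

From HB Require Import structures.
From mathcomp Require Import all_boot all_order all_algebra.
From mathcomp Require Import all_classical all_reals all_analysis.
Set Implicit Arguments. Unset Strict Implicit. Unset Printing Implicit Defensive.
Import Order.TTheory GRing.Theory Num.Theory.
Local Open Scope classical_set_scope.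
Local Open Scope ring_scope.

(* Weight functions are modelled as total functions R -> R; only their values
   on the open interval (T, +oo) matter. *)

Definition pos_meas_on (R : realType) (T : R) (c : R -> R) : Prop :=
  (forall t, T < t -> 0 < c t) /\ measurable_fun `]T, +oo[%classic c.

Definition ce_decreasing (R : realType) (T : R) (c : R -> R) : Prop :=
  forall s t, T < s -> s <= t -> c t * expR (- t) <= c s * expR (- s).

Definition ce_strictly_decreasing (R : realType) (T : R) (c : R -> R) : Prop :=
  forall s t, T < s -> s < t -> c t * expR (- t) < c s * expR (- s).

Definition increasing_after (R : realType) (a : R) (c : R -> R) : Prop :=
  forall s t, a < s -> s <= t -> c s <= c t.

Definition ce_integrable_from (R : realType) (T1 : R) (c : R -> R) : Prop :=
  (\int[@lebesgue_measure R]_(t in `[T1, +oo[%classic) (c t * expR (- t))%:E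
     < +oo)%E.

(* The class P_T, relative to the data (M, Analytic, psi, phi):
   - M is the (underlying topological space of the) complex manifold;
   - Analytic Z means "Z is an analytic subset of M";
   - psi : M -> \bar R with T = - sup_M psi;
   - phi : M -> R.
   The lower bound of e^{-phi} c(-psi) is required at the points z of K
   where c(-psi z) is defined, i.e. psi z real with -psi z in (T,+oo). *)
Definition P_T (R : realType) (M : topologicalType) (Analytic : set M -> Prop)
  (psi : M -> \bar R) (phi : M -> R) (T : R) (c : R -> R) : Prop :=
  pos_meas_on T c /\ ce_decreasing T c /\
  exists E : set M, closed E /\
    (exists Z : set M, Analytic Z /\ E `<=` Z `&` [set z | psi z = -oo%E]) /\
    forall K : set M, compact K -> K `<=` ~` E ->
      exists2 eps : R, 0 < eps &
        forall z t, K z -> psi z = (- t)%:E -> T < t ->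
          eps <= expR (- phi z) * c t.

(* Replace c by its running supremum m(t) = sup_{[T1, t]} c (with m = c before
   T1) and put c~ = m + 1.  Suprema preserve the decrease of c(t) e^{-t}, the
   added e^{-t} makes it strict, and m is nondecreasing after T1.  For
   integrability, c(u) <= c(t - 1) e^{u - t + 1} on [t - 1, t] gives, for
   h = c~ e^{-t}, the recurrence h(t) <= c(t - 1) e^{-(t - 1)} + e^{-1} h(t - 1)
   when t >= T1 + 1; integrating it over [T1, T1 + n] and translating by 1
   bounds these integrals by (\int_{[T1, T1 + 1)} h + \int_{T1}^oo c e^{-t}) /
   (1 - e^{-1}).  Before T1, c~ = c + 1, whence integrability from T; finally
   c <= c~ transports the lower bounds defining P_T. *)

From HB Require Import structures.
From mathcomp Require Import all_boot all_order all_algebra.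
From mathcomp Require Import all_classical all_reals all_analysis.
From mathcomp Require Import measurable_realfun.
From mathcomp Require Import ring lra.
Import Order.TTheory GRing.Theory Num.Theory.
Local Open Scope classical_set_scope.
Local Open Scope ring_scope.

Section lebesgue_integral_itv.
Context {R : realType}.
Local Notation mu := (@lebesgue_measure R).
Implicit Types (s : R) (A D : set R).

Lemma preimage_center_itv s b1 b2 (x y : R) :
  center s @^-1` [set` Interval (BSide b1 x) (BSide b2 y)] =
  [set` Interval (BSide b1 (x + s)) (BSide b2 (y + s))].
Proof. by apply/seteqP; split => t /=; rewrite !in_itv /= lteifBrDr lteifBlDr. Qed.

Lemma ge0_integral_itv_bndbnd_setU (a b c : itv_bound R) (f : R -> \bar R) :
  (a <= b)%O -> (b <= c)%O ->
  measurable_fun [set` Interval a c] f ->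
  (forall t, [set` Interval a c] t -> (0 <= f t)%E) ->
  (\int[mu]_(t in [set` Interval a c]) f t =
   \int[mu]_(t in [set` Interval a b]) f t + \int[mu]_(t in [set` Interval b c]) f t)%E.
Proof.
move=> ab bc mf f0; rewrite (itv_bndbnd_setU ab bc) in mf f0 *.
apply: ge0_integral_setU => //; apply/disj_set2P/seteqP; split => // t [] /=.
rewrite !itv_boundlr => /andP[_ tb] /andP[bt _].
by have := le_trans tb bt; rewrite leBSide /= ltxx.
Qed.

Lemma measurable_fun_center d (U : measurableType d) (s : R) (D : set R) (f : R -> U) :
  measurable D -> measurable_fun D f ->
  measurable_fun (center s @^-1` D) (f \o center s).
Proof.
move=> mD mf; apply: (measurable_comp mD _ mf); first by move=> _ [t + <-].
apply: (@measurable_funS _ _ _ _ setT) => //.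
exact: measurable_funD (@measurable_id _ _ _) (measurable_cst _).
Qed.

(* [center s] retyped on the Lebesgue sigma-algebra of [R], as required by
   [lebesgue_measure_unique] and [ge0_integral_pushforward]. *)
Let centerm s : measurableTypeR R -> measurableTypeR R := center s.

Let measurable_centerm s : measurable_fun [set: measurableTypeR R] (centerm s).
Proof. exact: measurable_funD (@measurable_id _ _ _) (measurable_cst _). Qed.

Let lebesgue_measure_centerm s A : measurable A ->
  pushforward mu (centerm s) A = mu A.
Proof.
move=> mA; apply/esym/lebesgue_measure_unique => //= _ [[a b]] _ <-.
rewrite /pushforward preimage_center_itv !lebesgue_measure_itv /= !lte_fin ltrD2r.
by case: ifP => // _; congr (_%:E); ring.
Qed.

Lemma ge0_integral_center s D (f : R -> \bar R) : measurable D ->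
  measurable_fun D f -> (forall t, D t -> (0 <= f t)%E) ->
  (\int[mu]_(t in center s @^-1` D) f (center s t) = \int[mu]_(t in D) f t)%E.
Proof.
move=> mD mf f0; rewrite -(ge0_integral_pushforward (measurable_centerm s)) //.
- by apply: eq_measure_integral => //= A mA _; exact: lebesgue_measure_centerm.
- by move=> t /[!inE]; exact: f0.
Qed.

End lebesgue_integral_itv.

Section bounded_integral.
Context d (X : measurableType d) (R : realType) (mu : {measure set X -> \bar R}).

Lemma ge0_integral_bounded_lty (D : set X) (k : R) (f : X -> R) :
  measurable D -> (mu D < +oo)%E -> measurable_fun D f ->
  (forall x, D x -> 0 <= f x <= k) -> (\int[mu]_(x in D) (f x)%:E < +oo)%E.
Proof.
move=> mD muD mf fk.
apply: (@le_lt_trans _ _ (\int[mu]_(x in D) (cst k%:E) x)%E).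
  apply: ge0_le_integral => //.
  - by move=> x /fk /andP[f0 _]; rewrite lee_fin.
  - exact/measurable_EFinP.
  - by move=> x /fk /andP[_ fk']; rewrite lee_fin.
have mu_fin : mu D \is a fin_num by rewrite ge0_fin_numE.
by rewrite integral_cst // -(fineK mu_fin) -EFinM ltry.
Qed.

End bounded_integral.

Section integrable_of_recurrence.
Context {R : realType}.
Local Notation mu := (@lebesgue_measure R).
Variables (a q : R) (h g : R -> R).
Hypotheses (q_ge0 : 0 <= q) (q_lt1 : q < 1).
Hypotheses (h_ge0 : forall t, a <= t -> 0 <= h t) (g_ge0 : forall t, a <= t -> 0 <= g t).
Hypotheses (mh : measurable_fun `[a, +oo[ h) (mg : measurable_fun `[a, +oo[ g).
Hypothesis h_head : (\int[mu]_(t in `[a, (a + 1)%R[) (h t)%:E < +oo)%E.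
Hypothesis g_tail : (\int[mu]_(t in `[a, +oo[) (g t)%:E < +oo)%E.
Hypothesis h_rec : forall t, a + 1 <= t -> h t <= g (t - 1) + q * h (t - 1).

Let I (n : nat) := (\int[mu]_(t in `[a, (a + n%:R)%R]) (h t)%:E)%E.
Let K := fine (\int[mu]_(t in `[a, (a + 1)%R[) (h t)%:E).
Let G := fine (\int[mu]_(t in `[a, +oo[) (g t)%:E).

Let mhE D : measurable D -> D `<=` `[a, +oo[ -> measurable_fun D (EFin \o h).
Proof. by move=> mD Da; apply/measurable_EFinP; exact: measurable_funS mh. Qed.

Let mgE D : measurable D -> D `<=` `[a, +oo[ -> measurable_fun D (EFin \o g).
Proof. by move=> mD Da; apply/measurable_EFinP; exact: measurable_funS mg. Qed.

Let hE_ge0 D : D `<=` `[a, +oo[ -> forall t, D t -> (0 <= (h t)%:E)%E.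
Proof. by move=> Da t /Da /=; rewrite in_itv /= andbT lee_fin => /h_ge0. Qed.

Let gE_ge0 D : D `<=` `[a, +oo[ -> forall t, D t -> (0 <= (g t)%:E)%E.
Proof. by move=> Da t /Da /=; rewrite in_itv /= andbT lee_fin => /g_ge0. Qed.

Let head_sub : `[a, (a + 1)%R[ `<=` `[a, +oo[.
Proof. exact: subset_itvl. Qed.

Let itvcc_sub b : `[a, b] `<=` `[a, +oo[.
Proof. exact: subset_itvl. Qed.

Let K_E : (\int[mu]_(t in `[a, (a + 1)%R[) (h t)%:E)%E = K%:E.
Proof. by rewrite fineK // ge0_fin_numE // integral_ge0 // => t; exact: hE_ge0. Qed.

Let G_E : (\int[mu]_(t in `[a, +oo[) (g t)%:E)%E = G%:E.
Proof. by rewrite fineK // ge0_fin_numE // integral_ge0 // => t; exact: gE_ge0. Qed.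

Let K_ge0 : 0 <= K.
Proof. by rewrite -lee_fin -K_E integral_ge0 // => t; exact: hE_ge0. Qed.

Let G_ge0 : 0 <= G.
Proof. by rewrite -lee_fin -G_E integral_ge0 // => t; exact: gE_ge0. Qed.

Let F t := g t + q * h t.

Let mF D : measurable D -> D `<=` `[a, +oo[ -> measurable_fun D F.
Proof.
move=> mD Da; apply: measurable_funD; first exact: measurable_funS mg.
by apply: measurable_funM; [exact: measurable_cst | exact: measurable_funS mh].
Qed.

Let F_ge0 t : a <= t -> 0 <= F t.
Proof. by move=> ta; rewrite addr_ge0 ?mulr_ge0 ?g_ge0 ?h_ge0. Qed.

Let I_tail n : (\int[mu]_(t in `[(a + 1)%R, (a + n.+1%:R)%R]) (h t)%:E <=
  G%:E + q%:E * I n)%E.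
Proof.
have shiftE : `[(a + 1)%R, (a + n.+1%:R)%R]%classic = center 1 @^-1` `[a, (a + n%:R)%R].
  by rewrite preimage_center_itv -natr1 addrA addrAC.
have tail_sub : `[(a + 1)%R, (a + n.+1%:R)%R] `<=` `[a, +oo[.
  by apply: subset_itv; rewrite bnd_simp ?lerDl.
apply: (@le_trans _ _
    (\int[mu]_(t in `[(a + 1)%R, (a + n.+1%:R)%R]) (F (center 1 t))%:E)%E).
  apply: ge0_le_integral => //.
  - exact: hE_ge0.
  - exact: mhE.
  - apply/measurable_EFinP; rewrite shiftE.
    by apply: measurable_fun_center => //; exact: mF.
  - by move=> t /=; rewrite in_itv /= lee_fin => /andP[/h_rec].
rewrite shiftE (ge0_integral_center _ _ (fun t => (F t)%:E)) //; last 2 first.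
- by apply/measurable_EFinP; exact: mF.
- by move=> t /itvcc_sub /=; rewrite in_itv /= andbT lee_fin => /F_ge0.
rewrite /F; under eq_integral do rewrite EFinD.
rewrite ge0_integralD //; last 4 first.
- exact: gE_ge0.
- exact: mgE.
- by move=> t /itvcc_sub /=; rewrite in_itv /= andbT lee_fin => /h_ge0; exact: mulr_ge0.
- apply/measurable_EFinP/measurable_funM; first exact: measurable_cst.
  exact: measurable_funS mh.
under [X in (_ + X <= _)%E]eq_integral do rewrite EFinM.
rewrite ge0_integralZl_EFin //; last 2 first.
- exact: hE_ge0.
- exact: mhE.
rewrite leeD2r // -G_E; apply: ge0_subset_integral => //.
- exact: mgE.
- exact: gE_ge0.
Qed.

Let I_succ n : (I n.+1 <= (K + G)%:E + q%:E * I n)%E.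
Proof.
have a1 : a <= a + 1 by rewrite lerDl.
have a1n : a + 1 <= a + n.+1%:R by rewrite lerD2l ler1n.
rewrite /I (@ge0_integral_itv_bndbnd_setU _ _ (BLeft (a + 1))) ?bnd_simp //; last 2 first.
- exact: mhE.
- exact: hE_ge0.
by rewrite K_E EFinD -addeA leeD2l // I_tail.
Qed.

Let I_le n : (I n <= ((K + G) / (1 - q))%:E)%E.
Proof.
set B := (K + G) / (1 - q).
have B_ge0 : 0 <= B by apply: divr_ge0; [exact: addr_ge0 | rewrite subr_ge0 ltW].
have BE : B = K + G + q * B by rewrite /B; field; rewrite subr_eq0 gt_eqF.
elim: n => [|n IHn]; first by rewrite /I addr0 set_itv1 integral_set1 lee_fin.
apply: le_trans (I_succ n) _.
by rewrite {1}BE (EFinD (K + G)) EFinM leeD2l // lee_wpmul2l // lee_fin.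
Qed.

Lemma ge0_integral_itvcy_lty_of_recurrence :
  (\int[mu]_(t in `[a, +oo[) (h t)%:E < +oo)%E.
Proof.
have cvgI : (I n @[n --> \oo] -->
    \int[mu]_(t in \bigcup_n `[a, (a + n%:R)%R]%classic) (h t)%:E)%E.
  apply: ge0_nondecreasing_set_cvg_integral => //.
  - move=> m n mn; apply/subsetPset/subset_itvl.
    by rewrite bnd_simp lerD2l ler_nat.
  - by move=> n; exact: mhE.
  - by move=> n; exact: hE_ge0.
rewrite itv_bndy_bigcup_BRight -(cvg_lim _ cvgI) //.
apply: le_lt_trans (ltry ((K + G) / (1 - q))).
by apply: lime_le; [apply/cvg_ex; eexists; exact: cvgI | exact: nearW].
Qed.

End integrable_of_recurrence.

Lemma ce_le_growthE {R : realType} (c : R -> R) (s u : R) :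
  (c u * expR (- u) <= c s * expR (- s)) = (c u <= c s * expR (u - s)).
Proof. by rewrite -(ler_pM2r (expR_gt0 u)) -!mulrA -!expRD addNr expR0 mulr1 addrC. Qed.

Lemma ce_decreasing_growth {R : realType} {T : R} {c : R -> R} {s u : R} :
  ce_decreasing T c -> T < s -> s <= u -> c u <= c s * expR (u - s).
Proof. by move=> c_dec Ts su; rewrite -ce_le_growthE; exact: c_dec. Qed.

Lemma ce_strictly_decreasingW {R : realType} {T : R} {c : R -> R} :
  ce_strictly_decreasing T c -> ce_decreasing T c.
Proof.
by move=> c_sdec s t Ts; rewrite le_eqVlt => /predU1P[-> // | /(c_sdec _ _ Ts)/ltW].
Qed.

Lemma P_T_le {R : realType} {M : topologicalType} {Analytic : set M -> Prop}
    {psi : M -> \bar R} {phi : M -> R} {T : R} {c c' : R -> R} :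
  P_T Analytic psi phi T c -> pos_meas_on T c' -> ce_decreasing T c' ->
  (forall t, T < t -> c t <= c' t) -> P_T Analytic psi phi T c'.
Proof.
move=> [_ [_ [E [cE [EZ c_lb]]]]] c'_pm c'_dec c_le_c'.
split => //; split => //; exists E; split => //; split => // K cK KE.
have [eps eps_gt0 eps_le] := c_lb K cK KE; exists eps => // z t Kz psiz Tt.
by apply: le_trans (eps_le z t Kz psiz Tt) _; rewrite ler_wpM2l ?expR_ge0 ?c_le_c'.
Qed.

Section running_sup.
Context {R : realType} {T T1 : R} {c : R -> R}.
Hypotheses (c_gt0 : forall t, T < t -> 0 < c t) (c_dec : ce_decreasing T c).
Hypothesis TT1 : T < T1.

Definition running_sup t := if t < T1 then c t else sup [set c s | s in `[T1, t]].

Let in_itvcc (a b u : R) : `[a, b]%classic u = (a <= u <= b).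
Proof. by rewrite /= in_itv. Qed.

Let values_ub t : T1 <= t -> ubound [set c s | s in `[T1, t]] (c T1 * expR (t - T1)).
Proof.
move=> T1t _ [u /[!in_itvcc] /andP[T1u ut] <-].
apply: le_trans (ce_decreasing_growth c_dec TT1 T1u) _.
by rewrite ler_pM2l ?c_gt0 // ler_expR lerB.
Qed.

Let values_neq0 t : T1 <= t -> [set c s | s in `[T1, t]] !=set0.
Proof. by move=> T1t; exists (c T1), T1; rewrite // in_itvcc lexx. Qed.

Let values_has_sup t : T1 <= t -> has_sup [set c s | s in `[T1, t]].
Proof.
move=> T1t; split; first exact: values_neq0.
by exists (c T1 * expR (t - T1)); exact: values_ub.
Qed.

Let running_supE t : T1 <= t -> running_sup t = sup [set c s | s in `[T1, t]].
Proof. by move=> T1t; rewrite /running_sup ltNge T1t. Qed.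

Let c_le_running_supT1 s t : T1 <= s <= t -> c s <= running_sup t.
Proof.
move=> /andP[T1s st]; rewrite running_supE; last exact: le_trans st.
apply: sup_upper_bound; first exact: values_has_sup (le_trans T1s st).
by exists s; rewrite // in_itvcc T1s.
Qed.

Lemma c_le_running_sup t : T < t -> c t <= running_sup t.
Proof.
move=> Tt; have [tT1|T1t] := ltP t T1; first by rewrite /running_sup tT1.
by apply: c_le_running_supT1; rewrite T1t lexx.
Qed.

Lemma running_sup_gt0 t : T < t -> 0 < running_sup t.
Proof. by move=> Tt; exact: lt_le_trans (c_gt0 _ Tt) (c_le_running_sup _ Tt). Qed.

Lemma running_sup_nd s t : T1 <= s -> s <= t -> running_sup s <= running_sup t.
Proof.
move=> T1s st; rewrite !running_supE //; last exact: le_trans st.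
apply: sup_le; [| exact: values_neq0 | exact: values_has_sup (le_trans T1s st)].
move=> _ [u /[!in_itvcc] /andP[T1u us] <-]; exists (c u); split => //.
by exists u; rewrite // in_itvcc T1u (le_trans us st).
Qed.

Lemma running_sup_growth s t : T < s -> s <= t ->
  running_sup t <= running_sup s * expR (t - s).
Proof.
move=> Ts st; have [tT1|T1t] := ltP t T1.
  rewrite /running_sup tT1 (le_lt_trans st tT1).
  exact: ce_decreasing_growth c_dec Ts st.
rewrite running_supE //; apply: ge_sup; first exact: values_neq0.
move=> _ [u /[!in_itvcc] /andP[T1u ut] <-].
have [us|su] := leP u s.
  have cu : c u <= running_sup s by apply: c_le_running_supT1; rewrite T1u us.
  apply: le_trans cu _.
  apply: ler_peMr; first exact: ltW (running_sup_gt0 _ Ts).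
  by rewrite -expR0 ler_expR subr_ge0.
apply: le_trans (ce_decreasing_growth c_dec Ts (ltW su)) _.
apply: ler_pM; [exact/ltW/c_gt0 | exact: expR_ge0 | exact: c_le_running_sup |].
by rewrite ler_expR lerB.
Qed.

Lemma ce_decreasing_running_sup : ce_decreasing T running_sup.
Proof. by move=> s t Ts st; rewrite ce_le_growthE; exact: running_sup_growth. Qed.

Lemma running_sup_rec t : T1 + 1 <= t ->
  running_sup t <= running_sup (t - 1) + c (t - 1) * expR 1.
Proof.
move=> T1t; have T1t1 : T1 <= t - 1 by rewrite lerBrDr.
have Tt1 : T < t - 1 := lt_le_trans TT1 T1t1.
rewrite running_supE; last by apply: le_trans T1t1 _; rewrite gerBl.
apply: ge_sup; first by apply: values_neq0; apply: le_trans T1t1 _; rewrite gerBl.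
move=> _ [u /[!in_itvcc] /andP[T1u ut] <-].
have [ut1|t1u] := leP u (t - 1).
  rewrite -[c u]addr0; apply: lerD; first by apply: c_le_running_supT1; rewrite T1u ut1.
  by rewrite mulr_ge0 ?expR_ge0 // ltW // c_gt0.
rewrite -[c u]add0r; apply: lerD; first exact/ltW/running_sup_gt0.
apply: le_trans (ce_decreasing_growth c_dec Tt1 (ltW t1u)) _.
by rewrite ler_pM2l ?c_gt0 // ler_expR lerBlDr addrC subrK.
Qed.

Lemma measurable_running_sup : measurable_fun `]T, +oo[ c ->
  measurable_fun `]T, +oo[ running_sup.
Proof.
move=> mc; rewrite (@itv_bndbnd_setU _ _ _ (BLeft T1)) ?bnd_simp //.
apply/measurable_funU => //; split.
- apply: (eq_measurable_fun c); last first.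
    by apply: measurable_funS mc => //; exact: subset_itvl.
  by move=> x; rewrite inE /= in_itv /= => /andP[_ xT1]; rewrite /running_sup xT1.
- apply: (eq_measurable_fun (running_sup \o Num.max T1)).
    by move=> x; rewrite inE /= in_itv /= andbT => T1x; rewrite /= max_r.
  apply: nondecreasing_measurable => // x y xy /=.
  apply: running_sup_nd; first by rewrite le_max lexx.
  by rewrite ge_max !le_max lexx xy !orbT.
Qed.

End running_sup.
Arguments running_sup {R} T1 c t.

Section ctilde.
Context {R : realType} {T T1 : R} {c : R -> R}.
Hypotheses (c_gt0 : forall t, T < t -> 0 < c t) (c_dec : ce_decreasing T c).
Hypothesis TT1 : T < T1.
Local Notation mu := (@lebesgue_measure R).

Definition ctilde t := running_sup T1 c t + 1.

Lemma c_le_ctilde t : T < t -> c t <= ctilde t.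
Proof.
move=> Tt; apply: le_trans (c_le_running_sup c_gt0 c_dec TT1 _ Tt) _.
by rewrite lerDl.
Qed.

Lemma ctilde_gt0 t : T < t -> 0 < ctilde t.
Proof. by move=> Tt; exact: lt_le_trans (c_gt0 _ Tt) (c_le_ctilde _ Tt). Qed.

Lemma ce_strictly_decreasing_ctilde : ce_strictly_decreasing T ctilde.
Proof.
move=> s t Ts st; rewrite /ctilde !mulrDl !mul1r.
apply: ler_ltD; first exact: (ce_decreasing_running_sup c_gt0 c_dec TT1 _ _ Ts (ltW st)).
by rewrite ltr_expR ltrN2.
Qed.

Lemma increasing_after_ctilde : increasing_after T1 ctilde.
Proof.
move=> s t T1s st; rewrite lerD2r.
by apply: (running_sup_nd c_gt0 c_dec TT1) => //; exact: ltW.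
Qed.

Lemma measurable_ctilde : measurable_fun `]T, +oo[ c -> measurable_fun `]T, +oo[ ctilde.
Proof.
move=> mc; apply: measurable_funD (measurable_cst _).
exact: (measurable_running_sup c_gt0 c_dec TT1).
Qed.

Lemma ctilde_weight_rec t : T1 + 1 <= t ->
  ctilde t * expR (- t) <=
  c (t - 1) * expR (- (t - 1)) + expR (-1) * (ctilde (t - 1) * expR (- (t - 1))).
Proof.
move=> T1t; have eE : expR (- t) = expR (-1) * expR (- (t - 1)).
  by rewrite -expRD; congr expR; ring.
rewrite eE; apply: (@le_trans _ _ ((running_sup T1 c (t - 1) + c (t - 1) * expR 1 + 1) *
                                   (expR (-1) * expR (- (t - 1))))).
  rewrite ler_pM2r ?mulr_gt0 ?expR_gt0 // lerD2r.
  exact: (running_sup_rec c_gt0 c_dec TT1).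
rewrite le_eqVlt; apply/orP; left; apply/eqP.
rewrite /ctilde expRN; field; exact: lt0r_neq0 (expR_gt0 1).
Qed.

Let measurable_expRN (D : set R) : measurable_fun D (fun t : R => expR (- t)).
Proof.
apply: (@measurable_funS _ _ _ _ setT) => //.
exact: measurableT_comp (@measurable_expR R) (measurable_funN (@measurable_id _ _ _)).
Qed.

Let ge0_weight (g : R -> R) : (forall t, T < t -> 0 <= g t) ->
  forall t, T1 <= t -> 0 <= g t * expR (- t).
Proof. by move=> g0 t T1t; rewrite mulr_ge0 ?expR_ge0 // g0 // (lt_le_trans TT1). Qed.

Lemma ce_integrable_from_ctilde : measurable_fun `]T, +oo[ c ->
  ce_integrable_from T1 c -> ce_integrable_from T1 ctilde.
Proof.
move=> mc cint.
have T1_sub : `[T1, +oo[ `<=` `]T, +oo[ by apply: subset_itvr; rewrite bnd_simp.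
apply: (@ge0_integral_itvcy_lty_of_recurrence _ T1 (expR (-1)) _
         (fun t => c t * expR (- t))).
- exact: expR_ge0.
- by rewrite expR_lt1 ltrN10.
- by apply: ge0_weight => t Tt; exact/ltW/ctilde_gt0.
- by apply: ge0_weight => t Tt; exact/ltW/c_gt0.
- apply: measurable_funM (measurable_expRN _).
  exact: measurable_funS (measurable_ctilde mc).
- by apply: measurable_funM (measurable_expRN _); exact: measurable_funS mc.
- apply: (@ge0_integral_bounded_lty _ _ _ _ _ (ctilde T1 * expR (- T1))) => //.
  + by rewrite /= lebesgue_measure_itv; case: ifP => // _; exact: ltry.
  + apply: measurable_funM (measurable_expRN _).
    apply: measurable_funS (measurable_ctilde mc) => //.
    by apply: subset_trans T1_sub; exact: subset_itvl.
  + move=> t /=; rewrite in_itv /= => /andP[T1t _].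
    rewrite ge0_weight ?ge0_weight //=; last by move=> u Tu; exact/ltW/ctilde_gt0.
    exact: (ce_strictly_decreasingW ce_strictly_decreasing_ctilde) T1t.
- exact: cint.
- exact: ctilde_weight_rec.
Qed.

Section integrable_from_T.
Hypotheses (mc : measurable_fun `]T, +oo[ c) (cint : ce_integrable_from T c).

Let weight_ge0 (g : R -> R) : (forall t, T < t -> 0 < g t) ->
  forall D, D `<=` `]T, +oo[ -> forall t, D t -> (0 <= (g t * expR (- t))%:E)%E.
Proof.
move=> g_gt0 D DT t /DT /= /[!in_itv] /= /[!andbT] Tt.
by rewrite lee_fin ltW // mulr_gt0 ?expR_gt0 ?g_gt0.
Qed.

Let measurable_c_weight D : measurable D -> D `<=` `]T, +oo[ ->
  measurable_fun D (fun t => (c t * expR (- t))%:E).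
Proof.
move=> mD DT; apply/measurable_EFinP; apply: measurable_funM (measurable_expRN _).
exact: measurable_funS mc.
Qed.

Let c_weight_int D : measurable D -> D `<=` `]T, +oo[ ->
  (\int[mu]_(t in D) (c t * expR (- t))%:E < +oo)%E.
Proof.
move=> mD DT; apply: le_lt_trans cint.
rewrite -integral_itv_obnd_cbnd; last exact: measurable_c_weight.
apply: ge0_subset_integral => //; first exact: measurable_c_weight.
exact: weight_ge0.
Qed.

Let ctilde_weight_int_head :
  (\int[mu]_(t in `]T, T1[) (ctilde t * expR (- t))%:E < +oo)%E.
Proof.
have TT1_sub : `]T, T1[ `<=` `]T, +oo[ by apply: subset_itvl; rewrite bnd_simp.
under eq_integral => t.
  rewrite inE /= in_itv /= => /andP[_ tT1].
  rewrite /ctilde /running_sup tT1 mulrDl mul1r EFinD.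
  over.
rewrite ge0_integralD //; last 3 first.
- exact: weight_ge0.
- exact: measurable_c_weight.
- by apply/measurable_EFinP; exact: measurable_expRN.
apply: lte_add_pinfty; first exact: c_weight_int.
apply: (@ge0_integral_bounded_lty _ _ _ _ _ (expR (- T))) => //.
- by rewrite /= lebesgue_measure_itv; case: ifP => // _; exact: ltry.
- exact: measurable_expRN.
- by move=> t /=; rewrite in_itv /= => /andP[Tt _]; rewrite expR_ge0 ler_expR lerN2 ltW.
Qed.

Lemma ce_integrable_from_ctildeT : ce_integrable_from T ctilde.
Proof.
have mh : measurable_fun `]T, +oo[ (fun t => (ctilde t * expR (- t))%:E).
  apply/measurable_EFinP.
  exact: measurable_funM (measurable_ctilde mc) (measurable_expRN _).
rewrite /ce_integrable_from -integral_itv_obnd_cbnd //.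
rewrite (@ge0_integral_itv_bndbnd_setU _ _ (BLeft T1)) ?bnd_simp //; last first.
  exact: weight_ge0 ctilde_gt0 _ (@subset_refl _ _).
apply: lte_add_pinfty; first exact: ctilde_weight_int_head.
apply: ce_integrable_from_ctilde mc _.
by apply: c_weight_int => //; apply: subset_itvr; rewrite bnd_simp.
Qed.

End integrable_from_T.

End ctilde.
Arguments ctilde {R} T1 c t.

Theorem lemma2p10 (R : realType) (T : R) (c : R -> R) :
  pos_meas_on T c -> ce_decreasing T c ->
  (forall T1 : R, T < T1 -> ce_integrable_from T1 c ->
     exists ct : R -> R,
       [/\ pos_meas_on T ct,
           (forall t, T < t -> c t <= ct t),
           ce_strictly_decreasing T ct /\
             (exists2 a : R, T < a & increasing_after a ct)
         & ce_integrable_from T1 ct])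
  /\
  (forall (M : topologicalType) (Analytic : set M -> Prop)
          (psi : M -> \bar R) (phi : M -> R),
     ereal_sup (range psi) = (- T)%:E ->
     ce_integrable_from T c -> P_T Analytic psi phi T c ->
     forall T1 : R, T < T1 -> ce_integrable_from T1 c ->
     exists ct : R -> R,
       [/\ pos_meas_on T ct,
           (forall t, T < t -> c t <= ct t),
           ce_strictly_decreasing T ct /\
             (exists2 a : R, T < a & increasing_after a ct),
           ce_integrable_from T1 ct
         & ce_integrable_from T ct /\ P_T Analytic psi phi T ct]).
Proof.
move=> [c_gt0 mc] c_dec.
have ctilde_spec T1 : T < T1 -> ce_integrable_from T1 c ->
    [/\ pos_meas_on T (ctilde T1 c),
        (forall t, T < t -> c t <= ctilde T1 c t),
        ce_strictly_decreasing T (ctilde T1 c) /\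
          (exists2 a : R, T < a & increasing_after a (ctilde T1 c))
      & ce_integrable_from T1 (ctilde T1 c)].
  move=> TT1 cint; split.
  - by split; [exact: ctilde_gt0 | exact: measurable_ctilde].
  - exact: c_le_ctilde.
  - split; first exact: ce_strictly_decreasing_ctilde.
    by exists T1 => //; exact: (increasing_after_ctilde c_gt0 c_dec TT1).
  - exact: (ce_integrable_from_ctilde c_gt0 c_dec TT1 mc cint).
split=> [T1 TT1 cint | M Analytic psi phi _ cintT cPT T1 TT1 cint].
  by exists (ctilde T1 c); exact: ctilde_spec.
have [ct_pm c_le_ct [ct_sdec ct_inc] ct_int] := ctilde_spec T1 TT1 cint.
exists (ctilde T1 c); split => //.
split; first exact: (ce_integrable_from_ctildeT c_gt0 c_dec TT1 mc cintT).
exact: P_T_le cPT ct_pm (ce_strictly_decreasingW ct_sdec) c_le_ct.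
Qed.
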